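(* Let $n\ge1$, $m=2n$, let $\delta_1,\delta_2>0$, and for $k,k'\in\{1,2\}$ let $\hat g_{k,k'}(u)=\int_{[0,\infty)}e^{-uz}\,dG_{k,k'}(z)$ be the Laplace transform of a probability distribution $G_{k,k'}$ on $[0,\infty)$. For $(v_1,\ldots,v_m)\in\mathbb{R}_+^m$ define functions $l_1,\ldots,l_m$ on $[0,\infty)$ by $l_1(t)=v_{2n}e^{-\delta_2 t}$, $l_2(t)=v_{2n-1}e^{-\delta_1 t}$, and for $k=1,\ldots,n-1$, $$l_{2k+1}(t)=v_{2(n-k)}e^{-\delta_2 t}+e^{-\delta_2 t}\int_0^t e^{\delta_2 s}\big[1-\hat g_{1,2}(l_{2k}(s))+1-\hat g_{2,2}(l_{2k-1}(s))\big]ds,$$ $$l_{2k+2}(t)=v_{2(n-k)-1}e^{-\delta_1 t}+e^{-\delta_1 t}\int_0^t e^{\delta_1 s}\big[1-\hat g_{1,1}(l_{2k}(s))+1-\hat g_{2,1}(l_{2k-1}(s))\big]ds.$$ Then for every $i=1,\ldots,m$ and every $(v_1,\ldots,v_m)\in\mathbb{R}_+^m$, $\lim_{t\to\infty}l_i(t)=0$.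
   Context: These functions are the (unique) solution of the forward ODE system $\dot l_1+\delta_2 l_1=0$, $\dot l_2+\delta_1 l_2=0$, $\dot l_{2k+1}+\delta_2 l_{2k+1}-(1-\hat g_{1,2}(l_{2k}))-(1-\hat g_{2,2}(l_{2k-1}))=0$, $\dot l_{2k+2}+\delta_1 l_{2k+2}-(1-\hat g_{1,1}(l_{2k}))-(1-\hat g_{2,1}(l_{2k-1}))=0$ with the stated initial values. *)

From HB Require Import structures.
From mathcomp Require Import all_boot all_order all_algebra.
From mathcomp Require Import all_classical all_reals all_analysis.
Set Implicit Arguments. Unset Strict Implicit. Unset Printing Implicit Defensive.
Import Order.TTheory GRing.Theory Num.Theory.
Local Open Scope classical_set_scope.
Local Open Scope ring_scope.

Definition laplace {R : realType} (G : probability R R) (u : R) : R :=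
  fine (\int[G]_(z in `[0%R, +oo[) (expR (- (u * z)))%:E)%E.

(* One step of the recursion: given (l_{2k-1}, l_{2k}), the pair
   (l_{2k+1}, l_{2k+2}) with initial values a (for l_{2k+1}) and b (for l_{2k+2}). *)
Definition lstep {R : realType} (d1 d2 : R) (G11 G12 G21 G22 : probability R R)
  (a b : R) (p : (R -> R) * (R -> R)) : (R -> R) * (R -> R) :=
  let lodd := p.1 in let leven := p.2 in
  (fun t => a * expR (- (d2 * t)) + expR (- (d2 * t)) *
     Rintegral (@lebesgue_measure R) `[0%R, t]
       (fun s => expR (d2 * s) *
          ((1 - laplace G12 (leven s)) + (1 - laplace G22 (lodd s)))),
   fun t => b * expR (- (d1 * t)) + expR (- (d1 * t)) *
     Rintegral (@lebesgue_measure R) `[0%R, t]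
       (fun s => expR (d1 * s) *
          ((1 - laplace G11 (leven s)) + (1 - laplace G21 (lodd s))))).

(* lpair k = (l_{2k+1}, l_{2k+2}); v is 1-indexed (v i = v_i, i = 1..2n). *)
Fixpoint lpair {R : realType} (n : nat) (d1 d2 : R) (G11 G12 G21 G22 : probability R R)
  (v : nat -> R) (k : nat) : (R -> R) * (R -> R) :=
  match k with
  | 0 => (fun t => v (2 * n)%N * expR (- (d2 * t)),
          fun t => v (2 * n - 1)%N * expR (- (d1 * t)))
  | k'.+1 => lstep d1 d2 G11 G12 G21 G22 (v (2 * (n - k))%N) (v (2 * (n - k) - 1)%N)
               (lpair n d1 d2 G11 G12 G21 G22 v k')
  end.

Definition lfun {R : realType} (n : nat) (d1 d2 : R) (G11 G12 G21 G22 : probability R R)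
  (v : nat -> R) (i : nat) : R -> R :=
  let p := lpair n d1 d2 G11 G12 G21 G22 v ((i.-1)./2) in
  if odd i then p.1 else p.2.

From HB Require Import structures.
From mathcomp Require Import all_boot all_order all_algebra.
From mathcomp Require Import all_classical all_reals all_analysis.
From mathcomp Require Import ring lra zify.
Set Implicit Arguments. Unset Strict Implicit. Unset Printing Implicit Defensive.
Import Order.TTheory GRing.Theory Num.Theory.
Import numFieldNormedType.Exports.
Local Open Scope classical_set_scope.
Local Open Scope ring_scope.

(* Each pair l_{2k+1}, l_{2k+2} is nonnegative and tends to 0, by induction on
   k.  Since G puts mass 1 on [0, oo), its Laplace transform is continuous at 0
   with value 1, so the forcing terms 1 - hat g (l (s)) lie in [0, 1] and tend
   to 0.  By Duhamel's formula l (t) = e^{-dt} (a + \int_0^t e^{ds} h (s) ds),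
   and splitting the integral at a time T after which h <= eps, the part beyond
   T contributes at most eps / d and the part before T at most
   B e^{dT} t e^{-dt}. *)

(* The integral of a nonnegative function is a supremum over the simple
   functions below it, hence monotone without measurability assumptions; the
   integrands of the recursion are not known to be measurable. *)
Lemma ge0_le_integral_nomeas d (T : measurableType d) (R : realType)
  (mu : measure T R) (D : set T) (f1 f2 : T -> \bar R) :
  (forall x, D x -> 0 <= f1 x)%E -> (forall x, D x -> f1 x <= f2 x)%E ->
  (\int[mu]_(x in D) f1 x <= \int[mu]_(x in D) f2 x)%E.
Proof.
move=> f10 f12.
have f20 x : D x -> (0 <= f2 x)%E by move=> Dx; exact: le_trans (f10 _ Dx) (f12 _ Dx).
rewrite !(integral_mkcond D) !ge0_integralTE; try exact: erestrict_ge0.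
apply: ereal_sup_le => _ [h hf <-]; exists h => // x.
exact: le_trans (hf x) (lee_restrict _ _).
Qed.

Lemma ge0_subset_integral_nomeas d (T : measurableType d) (R : realType)
  (mu : measure T R) (A B : set T) (f : T -> \bar R) :
  A `<=` B -> (forall x, B x -> 0 <= f x)%E ->
  (\int[mu]_(x in A) f x <= \int[mu]_(x in B) f x)%E.
Proof.
move=> AB f0; rewrite (integral_mkcond A) (integral_mkcond B).
apply: ge0_le_integral_nomeas => x _; rewrite /patch.
- by case: ifPn => // /set_mem /AB /f0.
- case: ifPn => [/set_mem Ax|_]; first by rewrite ifT //; exact/mem_set/AB.
  by case: ifPn => // /set_mem /f0.
Qed.

Section laplace_near0.
Variables (R : realType) (G : probability R R).
Hypothesis G_neg0 : G [set z : R | z < 0] = 0%E.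

Let I u := (\int[G]_(z in `[0%R, +oo[) (expR (- (u * z)))%:E)%E.

Let I_ge0_le1 u : 0 <= u -> (0 <= I u <= 1)%E.
Proof.
move=> u0; apply/andP; split.
  by apply: integral_ge0 => z _; rewrite lee_fin expR_ge0.
apply: (@le_trans _ _ (\int[G]_(z in `[0%R, +oo[) (cst 1%E z))%E).
  apply: ge0_le_integral_nomeas => z; rewrite /= in_itv /= andbT => z0.
    by rewrite lee_fin expR_ge0.
  by rewrite lee_fin -expR0 ler_expR oppr_le0 mulr_ge0.
by rewrite integral_cst //= mul1e probability_le1.
Qed.

Let laplaceE u : 0 <= u -> (laplace G u)%:E = I u.
Proof.
move=> u0; have /andP[I0 I1] := I_ge0_le1 u0.
by rewrite /laplace fineK // fin_num_abs gee0_abs // (le_lt_trans I1) // ltey.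
Qed.

Lemma laplace_ge0_le1 u : 0 <= u -> 0 <= laplace G u <= 1.
Proof. by move=> u0; rewrite -!lee_fin laplaceE // I_ge0_le1. Qed.

Lemma probability_itv_ge0 : G `[0%R, +oo[%classic = 1%E.
Proof.
have split0 : [set: R] = [set z : R | z < 0] `|` `[0%R, +oo[.
  apply/seteqP; split => z //= _; rewrite in_itv /= andbT.
  by case: (ltP z 0) => h; [left|right].
have neg_itv : [set z : R | z < 0] = `]-oo, 0[%classic.
  by apply/seteqP; split => z; rewrite /= in_itv.
have := probability_setT G; rewrite split0 measureU //; last 2 first.
- by rewrite neg_itv.
- apply/seteqP; split => z //=; rewrite !in_itv /= andbT.
  by case=> z0 z0'; move: (lt_le_trans z0 z0'); rewrite ltxx.
by rewrite [X in (X + _)%E](_ : _ = 0%E) ?add0e //; exact: G_neg0.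
Qed.

Lemma probability_itv0n_ge e : 0 < e ->
  exists N : nat, 1 - e <= fine (G `[0%R, N%:R]%classic).
Proof.
move=> e0; pose F (n : nat) := `[0%R, n%:R]%classic : set R.
have bigcupF : \bigcup_n F n = `[0%R, +oo[%classic.
  apply/seteqP; split => z /=.
    by move=> [n _]; rewrite /F /= !in_itv /= => /andP[-> _].
  rewrite in_itv /= andbT => z0; exists (Num.truncn z).+1 => //.
  by rewrite /F /= in_itv /= z0 /= ltW // truncnS_gt.
have ndF : {homo F : n m / (n <= m)%N >-> (n <= m)%O}.
  move=> n m nm; rewrite subsetEset => z; rewrite /F /= !in_itv /= => /andP[-> zn].
  by rewrite (le_trans zn) // ler_nat.
have GF1 : (G \o F) x @[x --> \oo] --> (1%E : \bar R).
  rewrite -probability_itv_ge0 -bigcupF.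
  apply: nondecreasing_cvg_mu => //; first by move=> i; rewrite /F.
  by apply: bigcupT_measurable => i; rewrite /F.
move: GF1 => /fine_cvgP [_ /cvgrPdist_lt /(_ e e0) [N _ /(_ N (leqnn N)) /= GFN]].
by exists N; move: GFN => /ltr_normlP [_]; rewrite /F; lra.
Qed.

(* With G [0, N] >= 1 - e/2 and u <= e/(2(N+1)), the integrand is >= 1 - e/2
   on [0, N], so the transform is >= (1 - e/2)^2 >= 1 - e. *)
Lemma laplace_near1 e : 0 < e ->
  exists2 eta, 0 < eta & forall u, 0 <= u -> u <= eta -> 1 - laplace G u <= e.
Proof.
wlog e1 : e / e <= 1.
  move=> small e0; have [e1|/ltW e1] := leP e 1; first exact: small.
  have [eta eta0 Heta] := small 1 (lexx _) ltr01.
  by exists eta => // u u0 ueta; apply: le_trans e1; exact: Heta.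
move=> e0; have e20 : 0 < e / 2 by rewrite divr_gt0.
have [N p_ge] := probability_itv0n_ge e20.
pose p := fine (G `[0%R, N%:R]%classic); rewrite -/p in p_ge.
have GNE : G `[0%R, N%:R]%classic = p%:E.
  by rewrite /p fineK // ge0_fin_numE // (le_lt_trans (probability_le1 _ _)) ?ltey.
have N1 : 0 < N%:R + 1 :> R by rewrite ltr_wpDl // ler0n.
exists (e / 2 / (N%:R + 1)); first by rewrite divr_gt0.
move=> u u0 ueta.
have lowerI : (((1 - e / 2) * p)%:E <= I u)%E.
  apply: (@le_trans _ _ (\int[G]_(z in `[0%R, N%:R]) (cst (1 - e / 2)%:E z))%E).
    by rewrite integral_cst // EFinM -[p%:E]GNE.
  apply: (@le_trans _ _ (\int[G]_(z in `[0%R, N%:R]) (expR (- (u * z)))%:E)%E).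
    apply: ge0_le_integral_nomeas => z; rewrite /= in_itv/= => /andP[z0 zN].
      by rewrite lee_fin; lra.
    rewrite lee_fin; apply: le_trans (expR_ge1Dx _).
    have uz : u * z <= e / 2 / (N%:R + 1) * N%:R by apply: ler_pM.
    have : e / 2 / (N%:R + 1) * N%:R <= e / 2.
      by rewrite mulrAC ler_pdivrMr // ler_pM2l // lerDl.
    lra.
  apply: ge0_subset_integral_nomeas => z; rewrite /= !in_itv/= ?andbT.
    by case/andP.
  by move=> _; rewrite lee_fin expR_ge0.
have : (1 - e / 2) * p <= laplace G u by rewrite -lee_fin laplaceE.
have := laplace_ge0_le1 u0.
have : 0 <= p by rewrite fine_ge0.
nra.
Qed.

End laplace_near0.

Section decay.
Variable R : realType.
Notation mu := (@lebesgue_measure R).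

Definition decays (f : R -> R) := (forall t, 0 <= f t) /\
  (forall e, 0 < e -> exists T, forall t, T <= t -> f t <= e).

Lemma decays_cvg0 (f : R -> R) : decays f -> f t @[t --> +oo] --> 0.
Proof.
move=> [f0 fe]; apply/cvgrPdist_le => e e0.
have [T HT] := fe e e0; exists T; split; first exact: num_real.
by move=> t /ltW Tt; rewrite sub0r normrN ger0_norm // HT.
Qed.

Lemma decaysD (f g : R -> R) : decays f -> decays g -> decays (f \+ g).
Proof.
move=> [f0 fe] [g0 ge]; split => [t|e e0]; first by rewrite addr_ge0.
have e20 : 0 < e / 2 by rewrite divr_gt0.
have [Tf HTf] := fe _ e20; have [Tg HTg] := ge _ e20.
exists (Num.max Tf Tg) => t; rewrite ge_max => /andP[/HTf ft /HTg gt] /=.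
by rewrite [e]splitr lerD.
Qed.

Lemma expRN_small (d : R) : 0 < d -> forall e, 0 < e ->
  exists T, forall t, T <= t -> expR (- (d * t)) <= e.
Proof.
move=> d0 e e0; exists (d * e)^-1 => t Tt.
have det : 1 <= d * e * t by rewrite -ler_pdivrMl ?mulr_gt0 // mulr1.
rewrite expRN -[e]invrK lef_pV2 ?posrE ?expR_gt0 ?invr_gt0 //.
apply: le_trans (expR_ge1Dx _).
rewrite -(ler_pM2l e0) mulfV ?gt_eqF //; nra.
Qed.

(* t e^{-dt} <= t / (1 + dt/2)^2 <= 4 / (d^2 t). *)
Lemma id_mul_expRN_small (d : R) : 0 < d -> forall e, 0 < e ->
  exists T, forall t, T <= t -> t * expR (- (d * t)) <= e.
Proof.
move=> d0 e e0; exists (4 / (e * d * d)) => t Tt.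
have edt : 4 <= e * d * d * t by rewrite -ler_pdivrMl ?mulr_gt0 // mulrC.
have t0 : 0 <= t by apply: le_trans Tt; rewrite divr_ge0 // ?mulr_ge0 // ltW.
have half_ge0 : 0 <= 1 + d * t / 2 by rewrite addr_ge0 // divr_ge0 // mulr_ge0 // ltW.
have sq_le : (1 + d * t / 2) * (1 + d * t / 2) <= expR (d * t).
  have -> : expR (d * t) = expR (d * t / 2) * expR (d * t / 2).
    by rewrite -expRD -splitr.
  by rewrite ler_pM // expR_ge1Dx.
rewrite expRN ler_pdivrMr ?expR_gt0 //.
apply: le_trans (_ : e * ((1 + d * t / 2) * (1 + d * t / 2)) <= _); last first.
  by rewrite ler_pM2l.
nra.
Qed.

Lemma decays_scale_expRN (a d : R) : 0 <= a -> 0 < d ->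
  decays (fun t => a * expR (- (d * t))).
Proof.
move=> a0 d0; split => [t|e e0]; first by rewrite mulr_ge0 // expR_ge0.
have a1 : 0 < a + 1 by rewrite ltr_wpDl.
have [T HT] := expRN_small d0 (divr_gt0 e0 a1).
exists T => t /HT et; apply: (@le_trans _ _ (a * (e / (a + 1)))).
  by rewrite ler_wpM2l.
rewrite mulrA ler_pdivrMr //; nra.
Qed.

Lemma decays_one_sub_laplace (G : probability R R) (f : R -> R) :
  G [set z : R | z < 0] = 0%E -> decays f -> decays (fun s => 1 - laplace G (f s)).
Proof.
move=> G_neg0 [f0 fe]; split => [s|e e0].
  by have /andP[_] := laplace_ge0_le1 G (f0 s); rewrite subr_ge0.
have [eta eta0 Heta] := laplace_near1 G_neg0 e0.
have [T HT] := fe eta eta0.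
by exists T => s /HT; exact: Heta.
Qed.

Lemma integral_exp_affine (c K d t : R) : 0 < d -> 0 < t ->
  (\int[mu]_(x in `[0%R, t]) (c * expR (d * x) + K)%:E =
   (c / d * (expR (d * t) - 1) + K * t)%:E)%E.
Proof.
move=> d0 t0; pose F x := c / d * expR (d * x) + K * x.
have dexp (x : R) : is_derive x 1 (fun y => expR (d * y)) (expR (d * x) * d).
  have dlin : is_derive x (1 : R) (fun y : R => d * y) d.
    by have := is_deriveZ d (is_derive_id x (1 : R)); rewrite /GRing.scale /= mulr1.
  exact: is_derive1_comp.
have dF (x : R) : is_derive x 1 F (c * expR (d * x) + K).
  have := is_deriveD (is_deriveZ (c / d) (dexp x)) (is_deriveZ K (is_derive_id x (1 : R))).
  move=> /is_derive_eq; apply.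
  by rewrite /GRing.scale /= mulr1; field; exact: lt0r_neq0.
have cF (x : R) : F y @[y --> x] --> F x.
  by apply/differentiable_continuous/derivable1_diffP; case: (dF x).
rewrite (@continuous_FTC2 R _ F 0 t t0).
- by rewrite /F !mulr0 expR0 mulr1 addr0 -EFinB; congr (_%:E); ring.
- apply: continuous_subspaceT => x.
  apply/differentiable_continuous/derivable1_diffP.
  by case: (is_deriveD (is_deriveZ c (dexp x)) (is_derive_cst K x 1)).
- split; first by move=> x _; case: (dF x).
  + exact/cvg_at_right_filter/cF.
  + exact/cvg_at_left_filter/cF.
- by move=> x _; rewrite derive1E derive_val.
Qed.

Let Rintegral_le_ge0 (D : set R) (f : R -> R) (X : R) :
  (forall x, D x -> 0 <= f x) ->
  (\int[mu]_(x in D) (f x)%:E <= X%:E)%E -> Rintegral mu D f <= X.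
Proof.
move=> f0 fX.
have I0 : (0 <= \int[mu]_(x in D) (f x)%:E)%E.
  by apply: integral_ge0 => x Dx; rewrite lee_fin f0.
rewrite /Rintegral -lee_fin fineK //.
by rewrite fin_num_abs gee0_abs // (le_lt_trans fX) // ltry.
Qed.

(* Bound the integrand by eps * e^{ds} after T and by B * e^{dT} before. *)
Lemma damped_integral_le (d eps B T t : R) (h : R -> R) :
  0 < d -> 0 <= eps -> 0 < t -> (forall s, 0 <= h s <= B) ->
  (forall s, T <= s -> h s <= eps) ->
  Rintegral mu `[0%R, t] (fun s => expR (d * s) * h s) <=
    eps / d * expR (d * t) + B * expR (d * T) * t.
Proof.
move=> d0 eps0 t0 hB h_eps.
have h0 s : 0 <= h s by case/andP: (hB s).
have B0 : 0 <= B by case/andP: (hB 0) => /le_trans; apply.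
pose K := B * expR (d * T).
have K0 : 0 <= K by rewrite mulr_ge0 // expR_ge0.
apply: (@le_trans _ _ (eps / d * (expR (d * t) - 1) + K * t)); last first.
  have : 0 <= eps / d by rewrite divr_ge0 // ltW.
  rewrite /K mulrBr mulr1; lra.
apply: Rintegral_le_ge0 => [s _|]; first by rewrite mulr_ge0 ?expR_ge0.
rewrite -integral_exp_affine //.
apply: ge0_le_integral_nomeas => s _; rewrite lee_fin; first by rewrite mulr_ge0 ?expR_ge0.
have [Ts|sT] := leP T s.
  have : expR (d * s) * h s <= eps * expR (d * s).
    by rewrite mulrC ler_wpM2r ?expR_ge0 ?h_eps.
  lra.
have : expR (d * s) * h s <= K.
  rewrite /K mulrC ler_pM ?expR_ge0 //; first by case/andP: (hB s).
  by rewrite ler_expR ler_pM2l // ltW.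
have : 0 <= eps * expR (d * s) by rewrite mulr_ge0 ?expR_ge0.
lra.
Qed.

Lemma decays_damped (d a B : R) (h : R -> R) : 0 < d -> 0 <= a ->
  (forall s, h s <= B) -> decays h ->
  decays (fun t => a * expR (- (d * t)) + expR (- (d * t)) *
     Rintegral mu `[0%R, t] (fun s => expR (d * s) * h s)).
Proof.
move=> d0 a0 hB [h0 he]; split => [t|e e0].
  rewrite addr_ge0 ?mulr_ge0 ?expR_ge0 //.
  by apply: Rintegral_ge0 => s _; rewrite mulr_ge0 ?expR_ge0.
have h0B s : 0 <= h s <= B by rewrite h0 hB.
pose e3 := e / 3; have e30 : 0 < e3 by rewrite divr_gt0.
have [T1 HT1] := he (d * e3) (mulr_gt0 d0 e30).
pose K := B * expR (d * T1).
have K0 : 0 <= K by rewrite mulr_ge0 ?expR_ge0 // (le_trans (h0 0)).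
have K1 : 0 < K + 1 by rewrite ltr_wpDl.
have [T2 HT2] := id_mul_expRN_small d0 (divr_gt0 e30 K1).
have [_ /(_ e3 e30) [T3 HT3]] := decays_scale_expRN a0 d0.
exists (Num.max 1 (Num.max T2 T3)) => t; rewrite !ge_max => /and3P[t1 /HT2 tE /HT3 aE].
pose E := expR (- (d * t)); pose Y := expR (d * t).
have EY : E * Y = 1 by rewrite /E /Y -expRD addNr expR0.
have E0 : 0 <= E by rewrite expR_ge0.
have KtE : K * (t * E) <= e3.
  apply: (@le_trans _ _ (K * (e3 / (K + 1)))); first by rewrite ler_wpM2l.
  rewrite mulrA ler_pdivrMr //; nra.
have := damped_integral_le d0 (ltW (mulr_gt0 d0 e30)) (lt_le_trans ltr01 t1) h0B HT1.
rewrite [d * e3 / d]mulrC mulKf ?gt_eqF // -/K -/Y => /(ler_wpM2l E0).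
rewrite mulrDr mulrCA EY mulr1 mulrCA -/E (mulrC E t).
have e3E : e3 + e3 + e3 = e by rewrite /e3; field.
by move: aE; rewrite -/E; lra.
Qed.

End decay.

Section recursion.
Variables (R : realType) (n : nat) (d1 d2 : R) (G11 G12 G21 G22 : probability R R).
Hypotheses (d1_gt0 : 0 < d1) (d2_gt0 : 0 < d2).
Hypotheses (G11_neg0 : G11 [set z : R | z < 0] = 0%E)
  (G12_neg0 : G12 [set z : R | z < 0] = 0%E)
  (G21_neg0 : G21 [set z : R | z < 0] = 0%E)
  (G22_neg0 : G22 [set z : R | z < 0] = 0%E).

Let forcing_le2 (G G' : probability R R) (f g : R -> R) :
  decays f -> decays g ->
  forall s, (1 - laplace G (f s)) + (1 - laplace G' (g s)) <= 2.
Proof.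
move=> [f0 _] [g0 _] s.
have /andP[Gf0 _] := laplace_ge0_le1 G (f0 s).
have /andP[Gg0 _] := laplace_ge0_le1 G' (g0 s).
lra.
Qed.

Lemma decays_lstep (a b : R) (p : (R -> R) * (R -> R)) : 0 <= a -> 0 <= b ->
  decays p.1 -> decays p.2 ->
  decays (lstep d1 d2 G11 G12 G21 G22 a b p).1 /\
  decays (lstep d1 d2 G11 G12 G21 G22 a b p).2.
Proof.
move=> a0 b0 dec1 dec2; split; apply: decays_damped => //.
- exact: forcing_le2.
- exact: decaysD (decays_one_sub_laplace G12_neg0 dec2)
                 (decays_one_sub_laplace G22_neg0 dec1).
- exact: forcing_le2.
- exact: decaysD (decays_one_sub_laplace G11_neg0 dec2)
                 (decays_one_sub_laplace G21_neg0 dec1).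
Qed.

Lemma decays_lpair (v : nat -> R) k :
  (forall j, (1 <= j <= 2 * n)%N -> 0 <= v j) -> (k < n)%N ->
  decays (lpair n d1 d2 G11 G12 G21 G22 v k).1 /\
  decays (lpair n d1 d2 G11 G12 G21 G22 v k).2.
Proof.
move=> v0; elim: k => [|k IHk] kn.
  by split; apply: decays_scale_expRN => //; apply: v0; apply/andP; split; lia.
have [dec1 dec2] := IHk (ltnW kn).
by apply: decays_lstep => //; apply: v0; apply/andP; split; lia.
Qed.

End recursion.

Theorem mainTheorem1 (R : realType) (n : nat) (d1 d2 : R)
  (G11 G12 G21 G22 : probability R R) :
  (1 <= n)%N -> 0 < d1 -> 0 < d2 ->
  G11 [set z : R | z < 0] = 0%E -> G12 [set z : R | z < 0] = 0%E ->
  G21 [set z : R | z < 0] = 0%E -> G22 [set z : R | z < 0] = 0%E ->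
  forall (v : nat -> R), (forall j, (1 <= j <= 2 * n)%N -> 0 <= v j) ->
  forall i, (1 <= i <= 2 * n)%N ->
    lfun n d1 d2 G11 G12 G21 G22 v i t @[t --> +oo] --> 0.
Proof.
move=> _ d1_gt0 d2_gt0 G11_neg0 G12_neg0 G21_neg0 G22_neg0 v v0 i /andP[i1 i2].
have kn : ((i.-1)./2 < n)%N by rewrite ltn_half_double -muln2; lia.
have [dec1 dec2] := decays_lpair d1_gt0 d2_gt0 G11_neg0 G12_neg0 G21_neg0 G22_neg0 v0 kn.
by rewrite /lfun; case: ifP => _; exact: decays_cvg0.
Qed.
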